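(* Let $k\ge 2$ and let $\mathcal{C}$ be the full flag code on $\mathbb{F}_q^{2k}$ constructed from a $k$-spread as described in the context. Let $\mathcal{F}=(\mathcal{F}_1,\ldots,\mathcal{F}_{2k-1})\in\mathcal{C}$ and let $\mathcal{X}=(\mathcal{X}_1,\ldots,\mathcal{X}_{2k-1})$ be a sequence of subspaces with $\mathcal{X}_i\subseteq\mathcal{F}_i$ for all $i$ and $\mathcal{X}_1=\cdots=\mathcal{X}_k=\{0\}$. Suppose there is $i\in\{k+1,\ldots,2k-1\}$ with $\dim\mathcal{X}_i>2(i-k)$, and let $i$ be the minimum such index. Then $\mathcal{F}$ is the unique flag $\mathcal{G}=(\mathcal{G}_1,\ldots,\mathcal{G}_{2k-1})\in\mathcal{C}$ with $\mathcal{X}_i\subseteq\mathcal{G}_i$.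
   Context: $q$ is a prime power. Construction: let $\{\mathcal{S}_1,\ldots,\mathcal{S}_{q^k+1}\}$ be a $k$-spread of $\mathbb{F}_q^{2k}$ (a set of $q^k+1$ $k$-dimensional subspaces pairwise intersecting trivially), with full-rank $k\times 2k$ generator matrices $\mathrm{S}_i$ (row space $\mathcal{S}_i$). Let $\mathrm{W}_i=\begin{pmatrix}\mathrm{S}_i\\ \mathrm{S}_{i+1}\end{pmatrix}$ for $i\le q^k$ and $\mathrm{W}_{q^k+1}=\begin{pmatrix}\mathrm{S}_{q^k+1}\\ \mathrm{S}_1\end{pmatrix}$, let $\mathcal{W}_i^{(j)}$ be the row space of the first $j$ rows of $\mathrm{W}_i$, and $\mathcal{C}=\{(\mathcal{W}_i^{(1)},\ldots,\mathcal{W}_i^{(2k-1)}): 1\le i\le q^k+1\}$. *)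

From HB Require Import structures.
From mathcomp Require Import all_boot all_order all_algebra.
Set Implicit Arguments.
Unset Strict Implicit.
Unset Printing Implicit Defensive.
Import GRing.Theory.
Local Open Scope ring_scope.

(* Subspaces of F^n are represented (mxalgebra style) as row spaces of
   matrices with n columns.  The field F_q is a finite field F, q = #|F|. *)

Definition is_spread (F : finFieldType) (k : nat)
  (S : 'I_(#|F| ^ k).+1 -> 'M[F]_(k, k + k)) : Prop :=
  (forall i, row_free (S i)) /\
  (forall i j, i != j -> \rank (S i :&: S j)%MS = 0%N).

(* W_i = (S_i ; S_{i+1}), indices taken cyclically (ordS). *)
Definition Wmx (F : finFieldType) (k : nat)
  (S : 'I_(#|F| ^ k).+1 -> 'M[F]_(k, k + k)) (i : 'I_(#|F| ^ k).+1)
  : 'M[F]_(k + k, k + k) := col_mx (S i) (S (ordS i)).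

Definition first_rows (F : fieldType) (m n : nat) (W : 'M[F]_(m, n)) (j : nat)
  : 'M[F]_(m, n) := \matrix_(r < m, c < n) (if (r < j)%N then W r c else 0).

Definition flagC (F : finFieldType) (k : nat)
  (S : 'I_(#|F| ^ k).+1 -> 'M[F]_(k, k + k)) (i : 'I_(#|F| ^ k).+1) (j : nat)
  : 'M[F]_(k + k, k + k) := first_rows (Wmx S i) j.

From mathcomp Require Import all_boot all_order all_algebra.
From mathcomp Require Import zify.
Import GRing.Theory.

Set Implicit Arguments.
Unset Strict Implicit.
Unset Printing Implicit Defensive.

(* If b <> a, the i-th subspaces of the flags a and b are S_a + T_a and
   S_b + T_b, where T_a and T_b are spanned by i - k rows of S_(a+1) and
   S_(b+1).  Enlarging one side of an intersection by a space of dimension d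
   raises its dimension by at most d, and S_a meets S_b trivially, so the two
   i-th subspaces meet in dimension at most 2(i - k) < dim X_i.  Hence X_i lies
   in the i-th subspace of no flag other than the one indexed by a.  Neither the
   minimality of i nor X_1 = ... = X_k = 0 is needed. *)

Section RowSpaces.
Variable F : fieldType.
Local Open Scope ring_scope.

Lemma mxrank_capmx_addsl n m1 m2 m3 (U : 'M[F]_(m1, n)) (A : 'M_(m2, n))
    (W : 'M_(m3, n)) :
  (\rank ((U + A) :&: W)%MS <= \rank (U :&: W)%MS + \rank A)%N.
Proof.
set P := ((U + A) :&: W)%MS.
have rank_PU : (\rank (P + U)%MS <= \rank U + \rank A)%N.
  apply: leq_trans _ (mxrank_adds_leqif U A).1.
  by apply: mxrankS; rewrite addsmx_sub capmxSl addsmxSl.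
have rank_PcapU : (\rank (P :&: U)%MS <= \rank (U :&: W)%MS)%N.
  by apply: mxrankS; rewrite capmxC capmxS ?capmxSr.
have := mxrank_sum_cap P U; lia.
Qed.

Lemma mxrank_capmx_adds n m1 m2 m3 m4 (U : 'M[F]_(m1, n)) (A : 'M_(m2, n))
    (V : 'M_(m3, n)) (B : 'M_(m4, n)) :
  (\rank ((U + A) :&: (V + B))%MS <= \rank (U :&: V)%MS + \rank A + \rank B)%N.
Proof.
apply: leq_trans (mxrank_capmx_addsl U A (V + B)%MS) _.
rewrite addnAC leq_add2r capmxC.
by apply: leq_trans (mxrank_capmx_addsl V B U) _; rewrite capmxC.
Qed.

Lemma first_rowsE m n (B : 'M[F]_(m, n)) j : first_rows B j = pid_mx j *m B.
Proof.
apply/matrixP => r c; rewrite !mxE (bigD1 r) //= big1 ?addr0.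
  by rewrite !mxE eqxx /=; case: (r < j)%N; rewrite ?mul1r ?mul0r.
by move=> s neq_sr; rewrite !mxE val_eqE eq_sym (negPf neq_sr) mul0r.
Qed.

Lemma mxrank_first_rows m n (B : 'M[F]_(m, n)) j : (\rank (first_rows B j) <= j)%N.
Proof.
rewrite first_rowsE; apply: leq_trans (mxrankM_maxl _ _) _.
have [le_jm | lt_mj] := leqP j m; first by rewrite rank_pid_mx.
exact: leq_trans (rank_leq_row _) (ltnW lt_mj).
Qed.

Lemma first_rows_col_mx m1 m2 n (A : 'M[F]_(m1, n)) (B : 'M_(m2, n)) j :
  (m1 <= j)%N -> first_rows (col_mx A B) j = col_mx A (first_rows B (j - m1)).
Proof.
move=> le_m1j; apply/matrixP => r c; rewrite !mxE.
case: splitP => r' ->; rewrite ?mxE; first by rewrite (leq_trans (ltn_ord r')).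
by rewrite ltn_subRL.
Qed.

Lemma mxrank_capmx_first_rows_col_mx m1 m2 n (U V : 'M[F]_(m1, n))
    (A B : 'M_(m2, n)) j : (m1 <= j)%N ->
  (\rank (first_rows (col_mx U A) j :&: first_rows (col_mx V B) j)%MS
     <= \rank (U :&: V)%MS + 2 * (j - m1))%N.
Proof.
move=> le_m1j; rewrite !first_rows_col_mx //.
rewrite -(cap_eqmx (addsmxE _ _) (addsmxE _ _)).
apply: leq_trans (mxrank_capmx_adds _ _ _ _) _.
have := mxrank_first_rows A (j - m1); have := mxrank_first_rows B (j - m1).
lia.
Qed.

End RowSpaces.

Theorem proposition4p13 (F : finFieldType) (k : nat)
  (S : 'I_(#|F| ^ k).+1 -> 'M[F]_(k, k + k))
  (a : 'I_(#|F| ^ k).+1) (X : nat -> 'M[F]_(k + k)) (i : nat) :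
  (2 <= k)%N ->
  is_spread S ->
  (forall j, (1 <= j <= (k + k).-1)%N -> (X j <= flagC S a j)%MS) ->
  (forall j, (1 <= j <= k)%N -> \rank (X j) = 0%N) ->
  (k < i <= (k + k).-1)%N ->
  (2 * (i - k) < \rank (X i))%N ->
  (forall j, (k < j < i)%N -> (\rank (X j) <= 2 * (j - k))%N) ->
  (X i <= flagC S a i)%MS /\
  (forall b : 'I_(#|F| ^ k).+1, (X i <= flagC S b i)%MS ->
     forall j, (1 <= j <= (k + k).-1)%N -> (flagC S b j == flagC S a j)%MS).
Proof.
move=> _ [_ spread_cap] sub_Xa _ range_i rank_Xi _.
have sub_Xia : (X i <= flagC S a i)%MS by apply: sub_Xa; lia.
have le_ki : (k <= i)%N by lia.
split=> // b sub_Xib j _.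
have [-> | neq_ba] := eqVneq b a; first by rewrite submx_refl.
have rank_cap : (\rank (flagC S b i :&: flagC S a i)%MS <= 2 * (i - k))%N.
  have := mxrank_capmx_first_rows_col_mx
    (S b) (S a) (S (ordS b)) (S (ordS a)) le_ki.
  by rewrite spread_cap.
have sub_cap : (X i <= flagC S b i :&: flagC S a i)%MS.
  by rewrite sub_capmx sub_Xib.
have := mxrankS sub_cap; lia.
Qed.
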